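(* Let $\beta>0$ and $\alpha>0$, and define $f:[0,1]\to\mathbb{R}$ by $f(k)=\alpha k(1-k)^{\beta}$. If $$\left(\frac{\beta+1}{\beta}\right)^{\beta}<\alpha\leq(\beta+1)\left(\frac{\beta+1}{\beta}\right)^{\beta},$$ then $f$ maps $[0,1]$ into itself and $f\in\mathfrak{G}$ (with $[a,b]=[0,1]$).
   Context: $\mathfrak{G}$ denotes the set of continuous maps $g$ from a closed interval $[a,b]$ into itself satisfying: (1) there exists $m\in(a,b)$ such that $g$ is strictly increasing on $[a,m]$ and strictly decreasing on $[m,b]$; (2) $g(a)\geq a$, $g(b)<b$, and $g(x)>x$ for all $x\in(a,m]$. *)

From HB Require Import structures.
From mathcomp Require Import all_boot all_order all_algebra.
From mathcomp Require Import all_classical all_reals all_analysis.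
Set Implicit Arguments. Unset Strict Implicit. Unset Printing Implicit Defensive.
Import Order.TTheory GRing.Theory Num.Theory.
Import numFieldNormedType.Exports.
Local Open Scope classical_set_scope.
Local Open Scope ring_scope.

Definition frakG (R : realType) (a b : R) (g : R -> R) : Prop :=
  [/\ a < b,
      {within `[a, b], continuous g},
      (forall x, a <= x <= b -> a <= g x <= b) &
      exists m : R,
        a < m < b /\
        (forall x y, a <= x -> x < y -> y <= m -> g x < g y) /\
        (forall x y, m <= x -> x < y -> y <= b -> g y < g x) /\
        a <= g a /\ g b < b /\
        (forall x, a < x <= m -> x < g x)].

From HB Require Import structures.
From mathcomp Require Import all_boot all_order all_algebra.
From mathcomp Require Import all_classical all_reals all_analysis.
From mathcomp Require Import ring lra.
Set Implicit Arguments. Unset Strict Implicit. Unset Printing Implicit Defensive.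
Import Order.TTheory GRing.Theory Num.Theory.
Import numFieldNormedType.Exports.
Local Open Scope classical_set_scope.
Local Open Scope ring_scope.

(* On (0, 1), ln f = ln alpha + ln k + beta * ln (1 - k) is strictly concave
   with derivative 1/k - beta/(1 - k), which changes sign at the peak
   1/(beta + 1); the secant bounds for ln make f strictly increasing before
   the peak and strictly decreasing after it. Since 1 - 1/(beta + 1) is the
   inverse of (beta + 1)/beta, the upper bound on alpha says exactly that
   f (peak) <= 1, and the lower bound that alpha (1 - x)^beta > 1, i.e.
   f x > x, for 0 < x <= peak. *)

Lemma ln_lt_subr1 (R : realType) (x : R) : 0 < x -> x != 1 -> ln x < x - 1.
Proof.
move=> x_gt0 x_neq1; rewrite -ltr_expR lnK ?posrE //.
by rewrite -[X in X < _](subrKC 1) expR_gt1Dx // subr_eq0.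
Qed.

Lemma ln_secant (R : realType) (x y : R) : 0 < x -> x < y ->
  (y - x) / y < ln y - ln x < (y - x) / x.
Proof.
move=> x_gt0 xy; have y_gt0 := lt_trans x_gt0 xy.
have [xN0 yN0] : x != 0 /\ y != 0 by rewrite !gt_eqF.
have lt_xy : ln (x / y) < x / y - 1.
  by rewrite ln_lt_subr1 ?divr_gt0 // lt_eqF // ltr_pdivrMr // mul1r.
have lt_yx : ln (y / x) < y / x - 1.
  by rewrite ln_lt_subr1 ?divr_gt0 // gt_eqF // ltr_pdivlMr // mul1r.
have -> : (y - x) / y = 1 - x / y by field.
have -> : (y - x) / x = y / x - 1 by field.
rewrite !ln_div ?posrE // in lt_xy lt_yx.
by apply/andP; split; lra.
Qed.

Lemma cvg_at_left1_onem (R : realType) : (fun k : R => 1 - k) @ 1^'- --> 0^'+.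
Proof.
move=> P /nbhs_ballP[e e_gt0 Pe].
apply/nbhs_ballP; exists e => // k /= k1e k_lt1.
  apply: Pe; last by rewrite subr_gt0.
by move: k1e; rewrite /ball /= sub0r normrN.
Qed.

Definition powlogistic (R : realType) (alpha beta k : R) : R :=
  alpha * k * (1 - k) `^ beta.

Section PowLogistic.
Variables (R : realType) (alpha beta : R).

Local Notation f := (powlogistic alpha beta).
Local Notation peak := (beta + 1)^-1.
Local Notation slope k := (k^-1 - beta / (1 - k)).

Lemma peak_gt0 : 0 < beta -> 0 < peak.
Proof. by move=> ?; rewrite invr_gt0; lra. Qed.

Lemma peak_lt1 : 0 < beta -> peak < 1.
Proof. by move=> ?; rewrite invf_lt1; lra. Qed.

Lemma le_peak k : 0 < beta -> (k <= peak) = (k * (beta + 1) <= 1).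
Proof. by move=> ?; rewrite -ler_pdivlMr ?div1r //; lra. Qed.

Lemma ge_peak k : 0 < beta -> (peak <= k) = (1 <= k * (beta + 1)).
Proof. by move=> ?; rewrite -ler_pdivrMr ?div1r //; lra. Qed.

Lemma powlogistic0 : f 0 = 0.
Proof. by rewrite /powlogistic mulr0 mul0r. Qed.

Lemma powlogistic1 : beta != 0 -> f 1 = 0.
Proof. by move=> ?; rewrite /powlogistic subrr powR0 ?mulr0. Qed.

Lemma powlogistic_ge0 k : 0 <= alpha -> 0 <= k -> 0 <= f k.
Proof. by move=> ? ?; rewrite mulr_ge0 ?powR_ge0 ?mulr_ge0. Qed.

Lemma powlogistic_gt0 k : 0 < alpha -> 0 < k < 1 -> 0 < f k.
Proof.
by move=> ? /andP[k_gt0 k_lt1]; rewrite mulr_gt0 ?powR_gt0 ?mulr_gt0 ?subr_gt0.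
Qed.

Lemma ln_powlogistic k : 0 < alpha -> 0 < k < 1 ->
  ln (f k) = ln alpha + ln k + beta * ln (1 - k).
Proof.
move=> ? /andP[k_gt0 k_lt1].
by rewrite !lnM ?posrE ?mulr_gt0 ?powR_gt0 ?subr_gt0 // ln_powR.
Qed.

Lemma ln_powlogistic_secant (x y : R) : 0 < alpha -> 0 < beta ->
  0 < x -> x < y -> y < 1 ->
  (y - x) * slope y < ln (f y) - ln (f x) < (y - x) * slope x.
Proof.
move=> alpha_gt0 beta_gt0 x_gt0 xy y_lt1; have y_gt0 := lt_trans x_gt0 xy.
have /andP[lo hi] := ln_secant x_gt0 xy.
have := @ln_secant R (1 - y) (1 - x) ltac:(lra) ltac:(lra).
rewrite (_ : 1 - x - (1 - y) = y - x); last by ring.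
move=> /andP[lo' hi'].
have loB : beta * ((y - x) / (1 - x)) < beta * (ln (1 - x) - ln (1 - y)).
  by rewrite ltr_pM2l.
have hiB : beta * (ln (1 - x) - ln (1 - y)) < beta * ((y - x) / (1 - y)).
  by rewrite ltr_pM2l.
have -> : (y - x) * slope y = (y - x) / y - beta * ((y - x) / (1 - y)) by ring.
have -> : (y - x) * slope x = (y - x) / x - beta * ((y - x) / (1 - x)) by ring.
rewrite !ln_powlogistic ?x_gt0 ?y_gt0 ?y_lt1 ?(lt_trans xy) //.
by apply/andP; split; lra.
Qed.

Lemma slope_ge0 k : 0 < beta -> 0 < k -> k <= peak -> 0 <= slope k.
Proof.
move=> beta_gt0 k_gt0 k_le; have k_lt1 := le_lt_trans k_le (peak_lt1 beta_gt0).
rewrite le_peak // in k_le.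
have -> : slope k = (1 - k * (beta + 1)) / (k * (1 - k)).
  by field; rewrite ?gt_eqF ?subr_gt0.
by rewrite divr_ge0 ?mulr_ge0 ?subr_ge0 // ltW.
Qed.

Lemma slope_le0 k : 0 < beta -> peak <= k -> k < 1 -> slope k <= 0.
Proof.
move=> beta_gt0 k_ge k_lt1; have k_gt0 := lt_le_trans (peak_gt0 beta_gt0) k_ge.
rewrite ge_peak // in k_ge.
have -> : slope k = (1 - k * (beta + 1)) / (k * (1 - k)).
  by field; rewrite ?gt_eqF ?subr_gt0.
by rewrite pmulr_lle0 ?invr_gt0 ?mulr_gt0 ?subr_gt0 // subr_le0.
Qed.

Lemma powlogistic_increasing (x y : R) : 0 < alpha -> 0 < beta ->
  0 <= x -> x < y -> y <= peak -> f x < f y.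
Proof.
move=> alpha_gt0 beta_gt0 x_ge0 xy y_le.
have y_gt0 := le_lt_trans x_ge0 xy.
have y_lt1 := le_lt_trans y_le (peak_lt1 beta_gt0).
move: x_ge0; rewrite le_eqVlt => /predU1P[<-|x_gt0].
  by rewrite powlogistic0 powlogistic_gt0 ?y_gt0.
have x_lt1 := lt_trans xy y_lt1.
have /andP[lo _] := ln_powlogistic_secant alpha_gt0 beta_gt0 x_gt0 xy y_lt1.
rewrite -ltr_ln ?posrE ?powlogistic_gt0 ?x_gt0 ?y_gt0 // -subr_gt0.
by apply: le_lt_trans _ lo; rewrite mulr_ge0 ?slope_ge0 // subr_ge0 ltW.
Qed.

Lemma powlogistic_decreasing (x y : R) : 0 < alpha -> 0 < beta ->
  peak <= x -> x < y -> y <= 1 -> f y < f x.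
Proof.
move=> alpha_gt0 beta_gt0 x_ge xy y_le1.
have x_gt0 := lt_le_trans (peak_gt0 beta_gt0) x_ge.
have x_lt1 := lt_le_trans xy y_le1.
move: y_le1; rewrite le_eqVlt => /predU1P[->|y_lt1].
  by rewrite powlogistic1 ?gt_eqF // powlogistic_gt0 ?x_gt0.
have y_gt0 := lt_trans x_gt0 xy.
have /andP[_ hi] := ln_powlogistic_secant alpha_gt0 beta_gt0 x_gt0 xy y_lt1.
rewrite -ltr_ln ?posrE ?powlogistic_gt0 ?x_gt0 ?y_gt0 // -subr_lt0.
by apply: lt_le_trans hi _; rewrite mulr_ge0_le0 ?slope_le0 // subr_ge0 ltW.
Qed.

Lemma powlogistic_le_peak (k : R) : 0 < alpha -> 0 < beta ->
  0 <= k <= 1 -> f k <= f peak.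
Proof.
move=> alpha_gt0 beta_gt0 /andP[k_ge0 k_le1].
case: (ltgtP k peak) => [k_lt|k_gt|-> //].
- exact/ltW/powlogistic_increasing.
- by apply/ltW/powlogistic_decreasing => //; exact: ltW.
Qed.

Lemma powR_onem_peak : 0 < beta ->
  (1 - peak) `^ beta = (((beta + 1) / beta) `^ beta)^-1.
Proof.
move=> beta_gt0.
have -> : 1 - peak = ((beta + 1) / beta)^-1 by field; rewrite ?gt_eqF //; lra.
by rewrite -powR_inv1 ?divr_ge0 ?ltW ?addr_gt0 // -powRrM mulN1r powRN.
Qed.

Lemma powlogistic_peak_le1 : 0 < beta ->
  alpha <= (beta + 1) * ((beta + 1) / beta) `^ beta -> f peak <= 1.
Proof.
move=> beta_gt0 alpha_le.
have c_gt0 : 0 < (beta + 1) / beta by rewrite divr_gt0 //; lra.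
rewrite /powlogistic powR_onem_peak // ler_pdivrMr ?powR_gt0 // mul1r.
by rewrite ler_pdivrMr 1?mulrC //; lra.
Qed.

Lemma powlogistic_gt_id (x : R) : 0 < beta ->
  ((beta + 1) / beta) `^ beta < alpha -> 0 < x <= peak -> x < f x.
Proof.
move=> beta_gt0 alpha_gt /andP[x_gt0 x_le].
have cpow_gt0 : 0 < ((beta + 1) / beta) `^ beta.
  by rewrite powR_gt0 // divr_gt0 //; lra.
have alpha_gt0 := lt_trans cpow_gt0 alpha_gt.
have x_lt1 := le_lt_trans x_le (peak_lt1 beta_gt0).
rewrite /powlogistic mulrAC ltr_pMl //.
apply: (@lt_le_trans _ _ (alpha / ((beta + 1) / beta) `^ beta)).
  by rewrite ltr_pdivlMr // mul1r.
have peak_le1 := ltW (peak_lt1 beta_gt0).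
rewrite ler_pM2l // -powR_onem_peak //.
by rewrite ge0_ler_powR ?nnegrE ?subr_ge0 ?lerD2l ?lerN2 // ltW.
Qed.

Lemma powlogistic_continuous_lt1 (x : R) : x < 1 -> {for x, continuous f}.
Proof.
move=> x_lt1; apply: cvgM; first by apply: cvgM => //; exact: cvg_cst.
have onem_cont : {for x, continuous (fun k : R => 1 - k)}.
  by apply: cvgB => //; exact: cvg_cst.
have pow_cont : {for 1 - x, continuous (fun y : R => y `^ beta)}.
  apply/differentiable_continuous/derivable1_diffP.
  have onem_gt0 : 0 < 1 - x by rewrite subr_gt0.
  by have [] := is_derive1_powR beta onem_gt0.
exact: continuous_comp onem_cont pow_cont.
Qed.

Lemma powlogistic_cvg_at_left1 : 0 < beta -> f @ 1^'- --> f 1.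
Proof.
move=> beta_gt0; rewrite powlogistic1 ?gt_eqF // -(mulr0 (alpha * 1)).
apply: cvgM; first by apply: cvgM; [exact: cvg_cst | exact: cvg_at_left_filter].
exact: cvg_comp _ _ (@cvg_at_left1_onem R) (powR_cvg0 beta_gt0).
Qed.

Lemma continuous_powlogistic : 0 < beta -> {within `[0, 1], continuous f}.
Proof.
move=> beta_gt0; apply/continuous_within_itvP => //; split.
- move=> x; rewrite in_itv /= => /andP[_ x_lt1].
  exact: powlogistic_continuous_lt1.
- exact/cvg_at_right_filter/powlogistic_continuous_lt1.
- exact: powlogistic_cvg_at_left1.
Qed.

End PowLogistic.

Theorem lemma2p1 (R : realType) (alpha beta : R) :
  0 < beta -> 0 < alpha ->
  ((beta + 1) / beta) `^ beta < alpha ->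
  alpha <= (beta + 1) * ((beta + 1) / beta) `^ beta ->
  (forall k : R, 0 <= k <= 1 -> 0 <= alpha * k * (1 - k) `^ beta <= 1) /\
  frakG 0 1 (fun k : R => alpha * k * (1 - k) `^ beta).
Proof.
move=> beta_gt0 alpha_gt0 alpha_gt alpha_le.
change ((forall k, 0 <= k <= 1 -> 0 <= powlogistic alpha beta k <= 1) /\
  frakG 0 1 (powlogistic alpha beta)).
have f_bounds k : 0 <= k <= 1 -> 0 <= powlogistic alpha beta k <= 1.
  move=> /[dup] /andP[k_ge0 _] k01.
  rewrite powlogistic_ge0 ?(ltW alpha_gt0) //=.
  apply: le_trans (powlogistic_peak_le1 beta_gt0 alpha_le).
  exact: powlogistic_le_peak.
split=> //; split=> //; first exact: continuous_powlogistic.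
exists (beta + 1)^-1; rewrite peak_gt0 ?peak_lt1 //; split=> //.
split; first by move=> x y; exact: powlogistic_increasing.
split; first by move=> x y; exact: powlogistic_decreasing.
rewrite powlogistic0 powlogistic1 ?gt_eqF //; split=> //; split=> //.
by move=> x; exact: powlogistic_gt_id.
Qed.
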